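(* In the asymptotic framework described in the context, if $F_{\Sigma_n}(u)\to F_\Sigma(u)$ almost surely for almost every $u>0$, then $\lim_{n,d\to\infty}\frac{d_\lambda^n}{n}$ exists for every $\lambda>0$.
   Context: Asymptotic framework: a sequence of positive semidefinite matrices $\Sigma_n\in\mathbb{R}^{d\times d}$ indexed by $n$, with $d=d(n)$, $n,d\to\infty$, $d/n\to y\in[0,1)$. $F_{\Sigma_n}(u)=d^{-1}\sum_{i=1}^d\mathbb{I}(\lambda_i(\Sigma_n)\le u)$ is the empirical spectral distribution and $F_\Sigma$ a limiting distribution function. $d_\lambda^n=\mathrm{tr}(\Sigma_n(\Sigma_n+\lambda I)^{-1})$. *)

From HB Require Import structures.
From mathcomp Require Import all_boot all_order all_algebra.
From mathcomp Require Import all_classical all_reals all_analysis.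
From mathcomp Require Import polyrcf.
Set Implicit Arguments. Unset Strict Implicit. Unset Printing Implicit Defensive.
Import Order.TTheory GRing.Theory Num.Theory.
Import numFieldNormedType.Exports.
Local Open Scope classical_set_scope.
Local Open Scope ring_scope.

Definition psd (R : realType) (d : nat) (A : 'M[R]_d) : Prop :=
  A^T = A /\ forall x : 'cV[R]_d, 0 <= (x^T *m A *m x) 0 0.

(* Empirical spectral distribution: F_A(u) = d^{-1} #{i : lambda_i(A) <= u},
   eigenvalues counted with (algebraic) multiplicity, i.e. as real roots of
   the characteristic polynomial with multiplicity. *)
Definition esd (R : realType) (d : nat) (A : 'M[R]_d) (u : R) : R :=
  (\sum_(x <- rootsR (char_poly A) | x <= u) (mup x (char_poly A))%:R) / d%:R.

Definition dlam (R : realType) (d : nat) (A : 'M[R]_d) (lam : R) : R :=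
  \tr (A *m invmx (A + lam%:M)).

Definition distribution_function (R : realType) (F : R -> R) : Prop :=
  {homo F : x y / x <= y} /\
  (forall a, F @ a^'+ --> F a) /\
  (F x @[x --> -oo] --> (0:R)) /\ (F x @[x --> +oo] --> (1:R)).

From HB Require Import structures.
From mathcomp Require Import all_boot all_order all_algebra.
From mathcomp Require Import all_classical all_reals all_analysis.
From mathcomp Require Import polyrcf complex spectral sesquilinear ring lra.
Import Order.TTheory GRing.Theory Num.Theory.
Import numFieldNormedType.Exports.
Local Open Scope classical_set_scope.
Local Open Scope ring_scope.
Set Implicit Arguments. Unset Strict Implicit. Unset Printing Implicit Defensive.

(* Write x_1, ..., x_d >= 0 for the eigenvalues of Sigma_n (real, by the spectral
   theorem).  Then d_lambda^n / n = (d/n) (1 - mean_i lambda / (x_i + lambda)), and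
   x |-> lambda / (x + lambda) is Lipschitz on [0, +oo[ and vanishes at infinity.  It is
   therefore uniformly approximated by step functions jumping at points of a grid
   with cells ]k/(m+1), (k+1)/(m+1)[, and the mean of a step function is a finite
   combination of values of the empirical spectral distribution F_{Sigma_n}.  Since
   F_{Sigma_n}(u) converges almost surely for Lebesgue-almost every u > 0, one point
   can be chosen in every cell so that, outside one null set, F_{Sigma_n} converges at
   all grid points at once; the means then form a Cauchy sequence. *)

Section Resolvent.
Variables (F : fieldType) (n : nat).
Implicit Types (A B P : 'M[F]_n) (a : F).

Lemma mulmx1_invmx A B : A *m B = 1%:M -> invmx A = B.
Proof.
move=> AB; have [Au _] := mulmx1_unit AB.
by rewrite -[B]mul1mx -(mulVmx Au) -mulmxA AB mulmx1.
Qed.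

Lemma invmx_conj P B : P \in unitmx ->
  invmx (invmx P *m B *m P) = invmx P *m invmx B *m P.
Proof.
move=> Pu; have [Bu|Bnu] := boolP (B \in unitmx).
  apply: mulmx1_invmx; rewrite -!mulmxA [P *m _]mulmxA mulmxV // mul1mx.
  by rewrite [B *m _]mulmxA mulmxV // mul1mx mulVmx.
rewrite [invmx B]invmx_out ?inE // invmx_out // inE.
by rewrite !unitmx_mul unitmx_inv Pu (negPf Bnu) andbF.
Qed.

Lemma char_poly_conj P B : P \in unitmx -> char_poly (invmx P *m B *m P) = char_poly B.
Proof.
move=> Pu; rewrite /char_poly /char_poly_mx !map_mxM.
set Q := map_mx polyC P; set Qi := map_mx polyC (invmx P).
have QiQ : Qi *m Q = 1%:M by rewrite -map_mxM mulVmx // map_mx1.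
have QQi : Q *m Qi = 1%:M by rewrite -map_mxM mulmxV // map_mx1.
have -> : 'X%:M - Qi *m map_mx polyC B *m Q = Qi *m ('X%:M - map_mx polyC B) *m Q.
  rewrite mulmxBr mulmxBl; congr (_ - _).
  by rewrite scalar_mxC -mulmxA QiQ mulmx1.
by rewrite !det_mulmx mulrC mulrA -det_mulmx QQi det1 mul1r.
Qed.

Lemma mxtrace_resolvent_conj P B a : P \in unitmx ->
  \tr (invmx P *m B *m P *m invmx (invmx P *m B *m P + a%:M)) =
  \tr (B *m invmx (B + a%:M)).
Proof.
move=> Pu; have -> : invmx P *m B *m P + a%:M = invmx P *m (B + a%:M) *m P.
  rewrite mulmxDr mulmxDl; congr (_ + _).
  by rewrite scalar_mxC -mulmxA mulVmx // mulmx1.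
rewrite invmx_conj // -!mulmxA [P *m _]mulmxA mulmxV // mul1mx.
by rewrite mxtrace_mulC -!mulmxA mulmxV // mulmx1.
Qed.

Lemma invmx_diag (r : 'rV[F]_n) : (forall i, r 0 i != 0) ->
  invmx (diag_mx r) = diag_mx (\row_i (r 0 i)^-1).
Proof.
move=> r0; apply: mulmx1_invmx; rewrite mulmx_diag -diag_const_mx.
by congr diag_mx; apply/rowP => i; rewrite !mxE mulfV.
Qed.

Lemma mxtrace_resolvent_diag (r : 'rV[F]_n) a : (forall i, r 0 i + a != 0) ->
  \tr (diag_mx r *m invmx (diag_mx r + a%:M)) = \sum_i r 0 i / (r 0 i + a).
Proof.
move=> ra0; have -> : diag_mx r + a%:M = diag_mx (\row_i (r 0 i + a)).
  by rewrite -diag_const_mx -raddfD; congr diag_mx; apply/rowP => i; rewrite !mxE.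
rewrite invmx_diag => [|i]; last by rewrite mxE.
by rewrite mulmx_diag mxtrace_diag; apply: eq_bigr => i _; rewrite !mxE.
Qed.

End Resolvent.

Section SymmetricSpectrum.
Variables (R : rcfType) (n : nat).
Implicit Types (A : 'M[R]_n).
Local Notation toC := (real_complex R).

Lemma symmetric_spectral A : A^T = A ->
  exists (P : 'M[R[i]]_n) (r : 'rV[R]_n),
    P \in unitmx /\ map_mx toC A = invmx P *m diag_mx (map_mx toC r) *m P.
Proof.
move=> symA; set AC := map_mx toC A.
have herm : AC \is hermsymmx.
  apply: realsym_hermsym.
    by apply/is_hermitianmxP; rewrite expr0 scale1r map_mx_id // /AC map_trmx symA.
  by apply/mxOverP => i j; rewrite mxE; apply/complex_realP; exists (A i j).
have /orthomx_spectralP eqA := hermitian_normalmx herm.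
exists (spectralmx AC), (map_mx (@complex.Re R) (spectral_diag AC)).
split; first exact: spectral_unit.
rewrite [LHS]eqA; congr (_ *m diag_mx _ *m _); apply/rowP => i.
by rewrite !mxE RRe_real //; exact: (mxOverP (hermitian_spectral_diag_real herm)).
Qed.

Lemma symmetric_eigenseq A : A^T = A ->
  exists s : seq R, char_poly A = \prod_(x <- s) ('X - x%:P) /\
    forall a, (forall x, x \in s -> x + a != 0) ->
      \tr (A *m invmx (A + a%:M)) = \sum_(x <- s) x / (x + a).
Proof.
move=> /symmetric_spectral[P [r [Pu eqA]]].
exists [seq r 0 i | i <- enum 'I_n]; split.
  apply: (@map_poly_inj _ _ toC).
  rewrite map_char_poly eqA char_poly_conj // char_poly_trig ?diag_mx_is_trig //.
  rewrite map_prod_XsubC big_map big_enum /=; apply: eq_bigr => i _.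
  by rewrite !mxE eqxx mulr1n.
move=> a ra0; apply: complexI.
rewrite -trace_map_mx map_mxM map_invmx map_mxD map_scalar_mx eqA.
rewrite mxtrace_resolvent_conj // mxtrace_resolvent_diag => [|i]; last first.
  by rewrite mxE -rmorphD fmorph_eq0 ra0 // map_f ?mem_enum.
rewrite rmorph_sum big_map big_enum /=; apply: eq_bigr => i _.
by rewrite !mxE fmorph_div rmorphD.
Qed.

End SymmetricSpectrum.

Lemma psd_root_ge0 (R : rcfType) n (A : 'M[R]_n) x :
  (forall v : 'cV_n, 0 <= (v^T *m A *m v) 0 0) -> root (char_poly A) x -> 0 <= x.
Proof.
move=> psdA; rewrite -eigenvalue_root_char => /eigenvalueP[v vA v0].
have := psdA v^T; rewrite trmxK vA -scalemxAl mxE.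
have vvE : (v *m v^T) 0 0 = \sum_j v 0 j ^+ 2.
  by rewrite mxE; apply: eq_bigr => j _; rewrite mxE expr2.
have vv : 0 < (v *m v^T) 0 0.
  rewrite lt_def vvE sumr_ge0 ?andbT => [|j _]; last exact: sqr_ge0.
  apply: contra v0 => /eqP/psumr_eq0P v0j; apply/eqP/rowP => j.
  by rewrite mxE; apply/eqP; rewrite -sqrf_eq0 v0j // => i _; rewrite sqr_ge0.
by rewrite pmulr_lge0.
Qed.

Lemma sum_mup_rootsR_prod_XsubC (R : rcfType) (s : seq R) (P : pred R) :
  let p := \prod_(y <- s) ('X - y%:P) in
  (\sum_(x <- rootsR p | P x) mup x p)%N = count P s.
Proof.
move=> p; have p0 : p != 0 by rewrite monic_neq0 // monic_prod_XsubC.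
rewrite (perm_big (undup s)) /=; last first.
  apply: uniq_perm; rewrite ?undup_uniq ?uniq_roots // => x.
  by rewrite mem_undup -(roots_on_rootsR p0 x) in_itv /= root_prod_XsubC.
rewrite -sum1_count -[RHS]big_undup_iterop_count; apply: eq_bigr => x _.
by rewrite mu_prod_XsubC Monoid.iteropE iter_addn mul1n addn0.
Qed.

Lemma natr_count (R : pzSemiRingType) (T : Type) (a : pred T) (s : seq T) :
  (count a s)%:R = \sum_(x <- s) (a x)%:R :> R.
Proof. by elim: s => [|x s IH]; rewrite ?big_nil ?big_cons //= natrD IH. Qed.

Section EmpiricalDistribution.
Variable R : realFieldType.
Implicit Types (s : seq R) (f g : R -> R) (u e : R).

Definition ecdf s u : R := (count (fun x => x <= u) s)%:R / (size s)%:R.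

Definition emean f s : R := (\sum_(x <- s) f x) / (size s)%:R.

Lemma ecdf_lt0 s u : (forall x, x \in s -> 0 <= x) -> u < 0 -> ecdf s u = 0.
Proof.
move=> s0 u0; rewrite /ecdf (@eq_in_count _ _ pred0) ?count_pred0 ?mul0r //.
by move=> x /s0 x0 /=; apply/negbTE; rewrite -ltNge (lt_le_trans u0).
Qed.

Lemma emean_dist f g s e : 0 <= e -> (forall x, x \in s -> `|f x - g x| <= e) ->
  `|emean f s - emean g s| <= e.
Proof.
move=> e0 fg; rewrite /emean -mulrBl -sumrB normrM normfV normr_nat.
have [->|sn0] := eqVneq (size s) 0%N; first by rewrite invr0 mulr0.
rewrite ler_pdivrMr ?ltr0n ?lt0n //; apply: le_trans (ler_norm_sum _ _ _) _.
rewrite mulr_natr -iter_addr_0 -(count_predT s) -big_const_seq /= !big_seq.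
exact: ler_sum.
Qed.

Lemma emean_step (K : nat) (c : nat -> R) (P : nat -> pred R) s :
  emean (fun x => \sum_(j < K) c j * (P j x)%:R) s =
  \sum_(j < K) c j * ((count (P j) s)%:R / (size s)%:R).
Proof.
rewrite /emean exchange_big mulr_suml; apply: eq_bigr => j _.
by rewrite natr_count mulrA big_distrr.
Qed.

End EmpiricalDistribution.

Lemma psd_eigenseq (R : realType) n (A : 'M[R]_n) : psd A ->
  exists s : seq R, [/\ forall x, x \in s -> 0 <= x,
    forall u, esd A u = ecdf s u &
    forall lam, 0 < lam -> dlam A lam = n%:R * (1 - emean (fun x => lam / (x + lam)) s)].
Proof.
case=> symA psdA; have [s [chA trA]] := symmetric_eigenseq symA.
have sz : size s = n by have := size_char_poly A; rewrite chA size_prod_XsubC => -[].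
have s0 x : x \in s -> 0 <= x.
  by move=> xs; apply: (psd_root_ge0 psdA); rewrite chA root_prod_XsubC.
exists s; split => // [u|lam lam0].
  by rewrite /esd /ecdf chA -natr_sum sum_mup_rootsR_prod_XsubC sz.
have xl0 x : x \in s -> x + lam != 0 by move/s0 => x0; rewrite gt_eqF // ltr_wpDl.
rewrite /dlam trA // big_seq (eq_bigr (fun x => 1 - lam / (x + lam))) => [|x /xl0 ?];
  last by field.
rewrite -big_seq sumrB big_const_seq count_predT iter_addr_0 /emean sz.
have [n0|n0] := eqVneq n 0%N.
  by move: sz; rewrite n0 mul0r => /size0nil ->; rewrite big_nil mulr0n subr0.
by rewrite mulrBr mulr1 mulrCA divff ?pnatr_eq0 ?mulr1.
Qed.

Lemma approx_cvg (R : realType) (a : nat -> R) :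
  (forall e, 0 < e ->
    exists2 b : nat -> R, cvg (b n @[n --> \oo]) & forall n, `|a n - b n| <= e) ->
  cvg (a n @[n --> \oo]).
Proof.
move=> approx; apply: cauchy_cvg; apply: cauchy_exP => e e0.
have e30 : 0 < e / 3 by rewrite divr_gt0.
have [b cb ab] := approx _ e30.
exists (lim (b n @[n --> \oo])).
have /cvgrPdist_lt/(_ _ e30) bl := cb.
rewrite /= /nbhs /=; near=> n; rewrite /ball /=.
have h1 : `|lim (b n @[n --> \oo]) - b n| < e / 3 by near: n.
have := ab n; rewrite distrC => h2.
rewrite (le_lt_trans (ler_distD (b n) _ _)) //; lra.
Unshelve. all: by end_near.
Qed.

Lemma is_cvg_sum (R : realType) (I : Type) (r : seq I) (F : I -> nat -> R) :
  (forall i, cvg (F i n @[n --> \oo])) -> cvg ((\sum_(i <- r) F i n) @[n --> \oo]).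
Proof.
move=> cF; elim: r => [|i r IH].
  by under eq_fun do rewrite big_nil; exact: is_cvg_cst.
by under eq_fun do rewrite big_cons; exact: is_cvgD.
Qed.

Definition grid_points (R : realFieldType) (v : nat -> nat -> R) :=
  forall m k, k%:R / m.+1%:R < v m k < k.+1%:R / m.+1%:R.

Section GridCells.
Variables (R : realFieldType) (v : nat -> nat -> R).
Hypothesis hv : grid_points v.

Lemma grid_gt0 m k : 0 < v m k.
Proof. by have /andP[+ _] := hv m k; apply: le_lt_trans; rewrite divr_ge0. Qed.

Lemma grid_le m i j : (i <= j)%N -> v m i <= v m j.
Proof.
rewrite leq_eqVlt => /orP[/eqP -> //|ij].
have /andP[_ vi] := hv m i; have /andP[vj _] := hv m j.
apply/ltW/(lt_trans vi)/(le_lt_trans _ vj).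
by rewrite ler_pM2r ?invr_gt0 ?ltr0n // ler_nat.
Qed.

(* -1 is an arbitrary lower end making the first cell ]-1, v m 0] contain 0. *)
Definition cell_lo m j : R := if j is j'.+1 then v m j' else -1.

Definition cell m j x : bool := cell_lo m j < x <= v m j.

Lemma cell_lo_le m j : cell_lo m j <= v m j.
Proof.
case: j => [|j] /=; first by apply/ltW/(lt_trans _ (grid_gt0 m 0)); rewrite ltrN10.
exact/grid_le/leqnSn.
Qed.

Lemma grid_le_cell_lo m i j : (i < j)%N -> v m i <= cell_lo m j.
Proof. by case: j => // j ij; exact: grid_le. Qed.

Lemma cell_freq m j s :
  (count (cell m j) s)%:R / (size s)%:R = ecdf s (v m j) - ecdf s (cell_lo m j).
Proof.
rewrite /ecdf; have -> : count (fun x => x <= v m j) s =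
    addn (count (cell m j) s) (count (fun x => x <= cell_lo m j) s).
  elim: s => //= x s ->; rewrite /cell; case: (leP x (cell_lo m j)) => hx /=.
    by rewrite (le_trans hx (cell_lo_le m j)) addnCA.
  by case: (x <= v m j); rewrite /= addnA.
by rewrite natrD mulrDl addrK.
Qed.

Lemma cell_uniq m j k x : cell m j x -> cell m k x -> j = k.
Proof.
have disj a b : (a < b)%N -> cell m a x -> cell m b x -> False.
  move=> ab /andP[_ xa] /andP[bx _].
  by have := le_lt_trans (le_trans xa (grid_le_cell_lo m ab)) bx; rewrite ltxx.
by move=> cj ck; case: (ltngtP j k) => // [/disj|/disj]; [move/(_ cj ck) | move/(_ ck cj)].
Qed.

Lemma cell_exists m K x : 0 <= x -> x <= v m K -> exists2 j, (j <= K)%N & cell m j x.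
Proof.
move=> x0; elim: K => [|K IH] xK.
  by exists 0%N => //; rewrite /cell xK andbT /= (lt_le_trans _ x0) ?ltrN10.
have [/IH[j jK cj]|Kx] := leP x (v m K); first by exists j; rewrite ?leqW.
by exists K.+1; rewrite // /cell Kx xK.
Qed.

Lemma cell_width m j x : 0 <= x -> cell m j x -> v m j - x <= 2 / m.+1%:R.
Proof.
move=> x0 /andP[lx _]; have /andP[_ vj] := hv m j.
have t0 : 0 < (m.+1%:R : R)^-1 by rewrite invr_gt0 ltr0n.
case: j lx vj => [|j] /= lx vj; first by set t := _^-1 in t0 vj *; lra.
have /andP[jv _] := hv m j.
have e : j.+2%:R / m.+1%:R = j%:R / m.+1%:R + 2 / m.+1%:R :> R.
  by rewrite -mulrDl -natrD addn2.
rewrite e in vj; set t := _^-1 in t0 vj jv *; lra.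
Qed.

End GridCells.

Section GridApproximation.
Variables (R : realType) (v : nat -> nat -> R) (f : R -> R) (L : R).
Hypothesis hv : grid_points v.
Hypothesis L0 : 0 <= L.
Hypothesis f_lip : forall x y, 0 <= x -> 0 <= y -> `|f x - f y| <= L * `|x - y|.
Hypothesis f_vanish : forall e, 0 < e -> exists M, forall x, M <= x -> `|f x| <= e.

Definition grid_step m K x : R := \sum_(j < K.+1) f (v m j) * (cell v m j x)%:R.

Lemma grid_step_approx m K e x : 0 <= x -> 2 * L / m.+1%:R <= e ->
  (forall y, v m K <= y -> `|f y| <= e) -> `|f x - grid_step m K x| <= e.
Proof.
move=> x0 me tail; have [xK|Kx] := leP x (v m K); last first.
  rewrite /grid_step big1 ?subr0 => [|j _]; first exact/tail/ltW.
  have jK : (j <= K)%N by rewrite -ltnS.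
  case: (boolP (cell v m j x)) => [/andP[_ xj]|]; last by rewrite mulr0.
  by have := lt_le_trans Kx (le_trans xj (grid_le hv m jK)); rewrite ltxx.
have [j jK cj] := cell_exists x0 xK.
rewrite /grid_step (bigD1 (Ordinal (jK : (j < K.+1)%N))) //= cj mulr1.
rewrite big1 ?addr0 => [|k kj]; last first.
  case: (boolP (cell v m k x)) => [ck|]; last by rewrite mulr0.
  by case/eqP: kj; apply/val_inj/(cell_uniq hv ck cj).
apply: le_trans (f_lip x0 (ltW (grid_gt0 hv m j))) _.
rewrite distrC ger0_norm ?subr_ge0; last by case/andP: cj.
by apply: le_trans me; rewrite [2 * L]mulrC -mulrA ler_wpM2l // cell_width.
Qed.

Lemma emean_grid_step m K e s : (forall x, x \in s -> 0 <= x) ->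
  2 * L / m.+1%:R <= e -> (forall y, v m K <= y -> `|f y| <= e) ->
  `|emean f s - \sum_(j < K.+1) f (v m j) * (ecdf s (v m j) - ecdf s (cell_lo v m j))| <= e.
Proof.
move=> s0 me tail.
have -> : \sum_(j < K.+1) f (v m j) * (ecdf s (v m j) - ecdf s (cell_lo v m j)) =
    emean (grid_step m K) s.
  rewrite (@emean_step _ K.+1 (fun j => f (v m j)) (cell v m)).
  by apply: eq_bigr => j _; rewrite cell_freq.
apply: emean_dist => [|x /s0 x0]; last exact: grid_step_approx.
by apply: le_trans me; rewrite divr_ge0 ?mulr_ge0.
Qed.

Lemma emean_cvg (s : nat -> seq R) : (forall n x, x \in s n -> 0 <= x) ->
  (forall m k, cvg (ecdf (s n) (v m k) @[n --> \oo])) -> cvg (emean f (s n) @[n --> \oo]).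
Proof.
move=> s0 hc; apply: approx_cvg => e e0.
pose m := Num.truncn (2 * L / e).
have me : 2 * L / m.+1%:R <= e.
  have := truncnS_gt (2 * L / e); rewrite -/m ltr_pdivrMr // => h.
  by rewrite ler_pdivrMr ?ltr0n // [e * _]mulrC; exact: ltW.
have [M hM] := f_vanish e0.
pose K := (Num.truncn (M * m.+1%:R)).+1.
have tail y : v m K <= y -> `|f y| <= e.
  move=> Ky; apply/hM/(le_trans _ Ky)/ltW/(lt_trans _ (andP (hv m K)).1).
  by rewrite ltr_pdivlMr ?ltr0n // truncnS_gt.
exists (fun n =>
    \sum_(j < K.+1) f (v m j) * (ecdf (s n) (v m j) - ecdf (s n) (cell_lo v m j))).
  apply: is_cvg_sum => j; apply: is_cvgM; first exact: is_cvg_cst.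
  apply: is_cvgB; first exact: hc.
  case: j => -[|j] _ /=; last exact: hc.
  rewrite (_ : (fun n => _) = fun=> 0); first exact: is_cvg_cst.
  by apply/funext => n; rewrite (ecdf_lt0 (s0 n)) ?ltrN10.
by move=> n; apply: emean_grid_step (s0 n) me tail.
Qed.

End GridApproximation.

Section ResolventKernel.
Variables (R : realFieldType) (lam : R).
Hypothesis lam0 : 0 < lam.

Lemma resolvent_kernel_lipschitz x z : 0 <= x -> 0 <= z ->
  `|lam / (x + lam) - lam / (z + lam)| <= lam^-1 * `|x - z|.
Proof.
move=> x0 z0; have xl : 0 < x + lam by rewrite ltr_wpDl.
have zl : 0 < z + lam by rewrite ltr_wpDl.
have -> : lam / (x + lam) - lam / (z + lam) = (z - x) * (lam / ((x + lam) * (z + lam))).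
  by field; rewrite !gt_eqF.
rewrite normrM distrC mulrC; apply: ler_wpM2r => //.
rewrite ger0_norm; last by rewrite divr_ge0 ?mulr_ge0 ?ltW.
rewrite ler_pdivrMr ?mulr_gt0 //; apply: (@le_trans _ _ (lam^-1 * (lam * lam))).
  by rewrite mulrA mulVf ?mul1r ?gt_eqF.
have lam_ge0 := ltW lam0.
apply: ler_wpM2l; first by rewrite invr_ge0.
by apply: ler_pM; rewrite ?lerDl ?lerDr.
Qed.

Lemma resolvent_kernel_vanish e : 0 < e ->
  exists M, forall x, M <= x -> `|lam / (x + lam)| <= e.
Proof.
move=> e0; exists (lam / e) => x hx.
have x0 : 0 <= x by apply: le_trans hx; rewrite divr_ge0 ?ltW.
have xl : 0 < x + lam by rewrite ltr_wpDl.
rewrite ler_pdivrMr // in hx.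
rewrite ger0_norm; last by rewrite divr_ge0 ?ltW.
rewrite ler_pdivrMr // mulrDr [e * x]mulrC.
by apply: le_trans hx _; rewrite lerDl mulr_ge0 ?ltW.
Qed.

End ResolventKernel.

Lemma dlam_div_cvg (R : realType) (d : nat -> nat) (A : forall n, 'M[R]_(d n)) (y lam : R)
    (v : nat -> nat -> R) :
  (forall n, psd (A n)) -> 0 < lam -> ((d n)%:R / n%:R : R) @[n --> \oo] --> y ->
  grid_points v -> (forall m k, cvg (esd (A n) (v m k) @[n --> \oo])) ->
  cvg ((dlam (A n) lam / n%:R) @[n --> \oo]).
Proof.
move=> psdA lam0 dy hv hc.
have [s /all_and3[s0 esdE dlamE]] := choice (fun n => psd_eigenseq (psdA n)).
under eq_fun do rewrite dlamE // mulrAC.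
apply: is_cvgM; first exact: cvgP dy.
apply: is_cvgB; first exact: is_cvg_cst.
have lamV0 : 0 <= lam^-1 by rewrite invr_ge0 ltW.
apply: (emean_cvg hv lamV0 (resolvent_kernel_lipschitz lam0)
  (resolvent_kernel_vanish lam0) s0).
by move=> m k; under eq_fun do rewrite -esdE; exact: hc.
Qed.

Lemma ae_lebesgue_exists_itv (R : realType) (Q : R -> Prop) (a b : R) :
  {ae lebesgue_measure, forall u, Q u} -> a < b -> exists2 u, a < u < b & Q u.
Proof.
move=> [N [mN N0 NQ]] ab; apply: contrapT => noQ.
have : lebesgue_measure [set` `]a, b[] = 0.
  apply: (subset_measure0 _ mN _ N0); first exact: measurable_itv.
  by move=> u /=; rewrite in_itv /= => abu; apply: NQ => Qu; apply: noQ; exists u.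
by rewrite lebesgue_measure_itv /= lte_fin ab -EFinB => -[] /eqP; rewrite subr_eq0 gt_eqF.
Qed.

Lemma ae_lebesgue_grid (R : realType) (Q : R -> Prop) :
  {ae lebesgue_measure, forall u, 0 < u -> Q u} ->
  exists2 v : nat -> nat -> R, grid_points v & forall m k, Q (v m k).
Proof.
move=> aeQ.
have cell_pt m k : exists u, k%:R / m.+1%:R < u < k.+1%:R / m.+1%:R /\ Q u.
  have mk : k%:R / m.+1%:R < k.+1%:R / m.+1%:R :> R.
    by rewrite ltr_pM2r ?invr_gt0 ?ltr0n // ltr_nat.
  have [u /[dup] mku /andP[ku _] Qu] := ae_lebesgue_exists_itv aeQ mk.
  by exists u; split => //; apply: Qu; apply: le_lt_trans ku; rewrite divr_ge0.
have /choice[v hv] : forall m, exists vm : nat -> R,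
    forall k, k%:R / m.+1%:R < vm k < k.+1%:R / m.+1%:R /\ Q (vm k).
  by move=> m; have [vm hvm] := choice (cell_pt m); exists vm.
by exists v => m k; have [] := hv m k.
Qed.

Theorem lemmaA2 (R : realType) (dO : measure_display) (Omega : measurableType dO)
  (P : probability Omega R)
  (d : nat -> nat) (y : R) (Sigma : forall n : nat, Omega -> 'M[R]_(d n))
  (FSigma : R -> R) :
  (forall n omega, psd (Sigma n omega)) ->
  (d n @[n --> \oo] --> \oo) ->
  0 <= y -> y < 1 ->
  ((d n)%:R / n%:R : R) @[n --> \oo] --> y ->
  distribution_function FSigma ->
  {ae (@lebesgue_measure R), forall u : R, 0 < u ->
     {ae P, forall omega, esd (Sigma n omega) u @[n --> \oo] --> FSigma u}} ->
  forall lam : R, 0 < lam ->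
    {ae P, forall omega, cvg ((dlam (Sigma n omega) lam / n%:R) @[n --> \oo])}.
Proof.
move=> psdS _ _ _ dy _ aeF lam lam0.
have [v hv aeP] := ae_lebesgue_grid aeF.
have := ae_foralln (fun m => ae_foralln (aeP m)).
apply: filterS => omega conv.
apply: (dlam_div_cvg (fun n => psdS n omega) lam0 dy hv) => m k.
exact: cvgP (conv m k).
Qed.
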